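(* Let $\mathcal{N}$ be a chemical reaction network. The following are equivalent: (i) $\mathcal{N}$ is injective; (ii) for every rate vector $\kappa\in\mathbb{R}_+^{\mathcal{R}}$ and all distinct $a,b\in\overline{\mathbb{R}}_+^n$ such that $\mathcal{Y}_a\cap\mathcal{Y}_b=\emptyset$ and $a-b\in\Gamma$, one has $f_\kappa(a)\neq f_\kappa(b)$. In particular, if $b\in\mathbb{R}^n_+$, then $\mathcal{Y}_a\cap\mathcal{Y}_b=\emptyset$ holds for every $a\in\overline{\mathbb{R}}^n_+$.
   Context: A chemical reaction network $\mathcal{N}=(\mathcal{S},\mathcal{C},\mathcal{R})$ consists of a finite set of species $\mathcal{S}=\{S_1,\dots,S_n\}$, a finite set of complexes $\mathcal{C}\subset\mathbb{Z}_{\ge 0}^n$ (species $S_i$ identified with the $i$-th standard basis vector), and a finite set of reactions $\mathcal{R}\subset\mathcal{C}\times\mathcal{C}$, written $y\to y'$ ($y$ the reactant complex), with $y\ne y'$. $\mathbb{R}_+$ denotes the positive reals and $\overline{\mathbb{R}}_+$ the nonnegative reals. A rate vector is $\kappa=(k_{y\to y'})\in\mathbb{R}_+^{\mathcal{R}}$; the mass-action species formation rate function is $f_\kappa(c)=\sum_{y\to y'\in\mathcal{R}}k_{y\to y'}c^y(y'-y)$, $c^y=\prod_i c_i^{y_i}$. The stoichiometric subspace is $\Gamma=\mathrm{span}\{y'-y:y\to y'\in\mathcal{R}\}$. The network is injective if for every rate vector $\kappa\in\mathbb{R}_+^{\mathcal{R}}$ and all distinct $a,b\in\mathbb{R}^n_+$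 with $a-b\in\Gamma$ one has $f_\kappa(a)\ne f_\kappa(b)$. For $a\in\overline{\mathbb{R}}^n_+$ let $I_a=\{i: a_i=0\}$ and $\mathcal{Y}_a=\{y : y\to y'\in\mathcal{R}\text{ for some }y',\ I_a\cap\mathrm{supp}(y)\ne\emptyset\}$, where $\mathrm{supp}(y)=\{i:y_i\ne 0\}$. *)

From HB Require Import structures.
From mathcomp Require Import all_boot all_order all_algebra.
From mathcomp Require Import reals.
Set Implicit Arguments. Unset Strict Implicit. Unset Printing Implicit Defensive.
Import Order.TTheory GRing.Theory Num.Theory.
Local Open Scope ring_scope.

(* A complex: a vector in Z_{>=0}^n, species S_i = i-th basis vector. *)
Definition cplx (n : nat) := {ffun 'I_n -> nat}.

(* A reaction y -> y' is a pair (y, y'); a network's reaction set is a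
   duplicate-free list of reactions (hypotheses in the theorem). *)
Definition reaction (n : nat) := (cplx n * cplx n)%type.

Section CRN.
Variables (R : realType) (n : nat).

Definition rvec (r : reaction n) : 'rV[R]_n :=
  \row_i ((r.2 i)%:R - (r.1 i)%:R).

(* monomial c^y = prod_i c_i^{y_i}  (with 0^0 = 1) *)
Definition mono (c : 'rV[R]_n) (y : cplx n) : R := \prod_(i < n) c 0 i ^+ y i.

Definition fk (rs : seq (reaction n)) (k : reaction n -> R) (c : 'rV[R]_n)
  : 'rV[R]_n := \sum_(r <- rs) (k r * mono c r.1) *: rvec r.

Definition in_Gamma (rs : seq (reaction n)) (v : 'rV[R]_n) : Prop :=
  exists lam : reaction n -> R, v = \sum_(r <- rs) lam r *: rvec r.

Definition rate_vector (rs : seq (reaction n)) (k : reaction n -> R) : Prop :=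
  forall r, r \in rs -> 0 < k r.

Definition pos_vec (a : 'rV[R]_n) : Prop := forall i, 0 < a 0 i.
Definition nonneg_vec (a : 'rV[R]_n) : Prop := forall i, 0 <= a 0 i.

Definition inY (rs : seq (reaction n)) (a : 'rV[R]_n) (y : cplx n) : Prop :=
  (exists y', (y, y') \in rs) /\ (exists i, a 0 i = 0 /\ y i != 0%N).

Definition Y_disjoint (rs : seq (reaction n)) (a b : 'rV[R]_n) : Prop :=
  forall y, ~ (inY rs a y /\ inY rs b y).

Definition injective_network (rs : seq (reaction n)) : Prop :=
  forall k, rate_vector rs k ->
  forall a b, pos_vec a -> pos_vec b -> a != b -> in_Gamma rs (a - b) ->
  fk rs k a != fk rs k b.

Definition boundary_injective (rs : seq (reaction n)) : Prop :=
  forall k, rate_vector rs k ->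
  forall a b, nonneg_vec a -> nonneg_vec b -> a != b ->
  Y_disjoint rs a b -> in_Gamma rs (a - b) ->
  fk rs k a != fk rs k b.

End CRN.

From HB Require Import structures.
From mathcomp Require Import all_boot all_order all_algebra.
From mathcomp Require Import reals.
From mathcomp Require Import lra.
Import Order.TTheory GRing.Theory Num.Theory.
Local Open Scope ring_scope.
Set Implicit Arguments. Unset Strict Implicit.

(* Given nonnegative a <> b with
   f_k(a) = f_k(b), shift both by the same small eps on every coordinate where
   a or b vanishes. The shifted points are positive and have the same
   difference a - b. Because Y_a and Y_b are disjoint, every reactant monomial
   either is untouched by the shift or vanishes at exactly one of a, b, in
   which case the sign of c^y(a) - c^y(b) survives a small enough shift. The
   differences before and after the shift thus have equal signs, so rescaling
   each rate constant by their positive ratio turns f_k(a) = f_k(b) into an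
   equality of f_k' at two distinct positive points. *)

Section SignRatio.
Variable R : realFieldType.
Implicit Types x y : R.

Definition sg_ratio x y : R := if y == 0 then 1 else x / y.

Lemma sg_ratio_gt0 x y : Num.sg x = Num.sg y -> 0 < sg_ratio x y.
Proof.
rewrite /sg_ratio; case: eqP => [//|/eqP y_neq0 sg_xy].
by rewrite -sgr_cp0 sgrM sgrV sg_xy -expr2 sqr_sg y_neq0.
Qed.

Lemma sg_ratioK x y : Num.sg x = Num.sg y -> sg_ratio x y * y = x.
Proof.
rewrite /sg_ratio; case: eqP => [->|/eqP y_neq0 _]; last by rewrite divfK.
by rewrite sgr0 mulr0 => /eqP; rewrite sgr_eq0 => /eqP.
Qed.

End SignRatio.

Lemma exists_pos_lower_bound (R : realDomainType) (T : eqType) (s : seq T)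
    (e : T -> R) :
  exists2 eps : R, 0 < eps <= 1 & {in s, forall x, 0 < e x -> eps <= e x}.
Proof.
elim: s => [|x s [eps /andP[eps_gt0 eps_le1] eps_le]].
  by exists 1 => [|//]; rewrite ltr01 lexx.
case: (ltP 0 (e x)) => [ex_gt0|ex_le0].
- exists (Num.min eps (e x)).
    by rewrite lt_min eps_gt0 ex_gt0 ge_min eps_le1.
  move=> z; rewrite inE => /orP[/eqP-> _|zs ez]; rewrite ge_min.
    by rewrite lexx orbT.
  by rewrite eps_le.
- exists eps; first by rewrite eps_gt0.
  move=> z; rewrite inE => /orP[/eqP->|]; last exact: eps_le.
  by rewrite ltNge ex_le0.
Qed.

Section Monomials.
Variables (R : realType) (n : nat).
Implicit Types (a b c d : 'rV[R]_n) (y : cplx n).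

Definition hits_zero c y : bool := [exists i, (c 0 i == 0) && (y i != 0%N)].

Lemma hits_zeroPn c y : ~~ hits_zero c y -> forall i, y i != 0%N -> c 0 i != 0.
Proof. by move/existsPn=> nhit i yi; have := nhit i; rewrite yi andbT. Qed.

Lemma mono_gt0 c y : (forall i, y i != 0%N -> 0 < c 0 i) -> 0 < mono c y.
Proof.
move=> c_gt0; apply: prodr_gt0 => i _.
have [->|yi] := eqVneq (y i) 0%N; first by rewrite expr0.
exact/exprn_gt0/c_gt0.
Qed.

Lemma mono_addr1_gt0 c y : nonneg_vec c -> 0 < mono (c + const_mx 1) y.
Proof. by move=> c_ge0; apply: mono_gt0 => i _; rewrite !mxE ltr_wpDl ?ltr01. Qed.

Lemma mono_eq0 c y : hits_zero c y -> mono c y = 0.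
Proof.
case/existsP=> i /andP[/eqP ci yi].
by rewrite /mono (bigD1 i) //= ci expr0n (negPf yi) mul0r.
Qed.

Lemma mono_le c d y : nonneg_vec c -> (forall i, c 0 i <= d 0 i) ->
  mono c y <= mono d y.
Proof.
move=> c_ge0 le_cd; apply: ler_prod => i _; rewrite exprn_ge0 //=.
by apply: lerXn2r; rewrite ?nnegrE // (le_trans _ (le_cd i)).
Qed.

Lemma mono_addr_eq c d y : (forall i, y i != 0%N -> d 0 i = 0) ->
  mono (c + d) y = mono c y.
Proof.
move=> d0; apply: eq_bigr => i _; rewrite mxE.
by have [->|/d0->] := eqVneq (y i) 0%N; rewrite ?expr0 ?addr0.
Qed.

(* The factor at a zero coordinate i0 of c contributes at most d_i0, and each
   other factor is at most that of c + 1. *)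
Lemma mono_addr_le c d y i0 : nonneg_vec c -> (forall i, 0 <= d 0 i <= 1) ->
  c 0 i0 = 0 -> y i0 != 0%N ->
  mono (c + d) y <= d 0 i0 * mono (c + const_mx 1) y.
Proof.
move=> c_ge0 d_01 ci0 yi0.
rewrite /mono (bigD1 i0) // [X in _ <= _ * X](bigD1 i0) //= !mxE ci0 !add0r.
rewrite expr1n mul1r; have /andP[di0_ge0 di0_le1] := d_01 i0.
apply: ler_pM.
- exact: exprn_ge0.
- apply: prodr_ge0 => i _; have /andP[di_ge0 _] := d_01 i.
  by rewrite mxE exprn_ge0 ?addr_ge0.
- by rewrite -(prednK (_ : 0 < y i0)%N) ?lt0n // exprS ler_piMr // exprn_ile1.
- apply: ler_prod => i _; rewrite !mxE; have /andP[di_ge0 di_le1] := d_01 i.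
  by rewrite exprn_ge0 ?addr_ge0 //= lerXn2r ?nnegrE ?addr_ge0 ?lerD2l.
Qed.

Lemma mono_addr_lt a b d y i0 : nonneg_vec a -> nonneg_vec b ->
  (forall i, 0 <= d 0 i <= 1) -> 0 < d 0 i0 ->
  a 0 i0 = 0 -> y i0 != 0%N ->
  d 0 i0 * (mono (a + const_mx 1) y + mono (b + const_mx 1) y) <= mono b y ->
  mono (a + d) y < mono (b + d) y.
Proof.
move=> a_ge0 b_ge0 d_01 di0_gt0 ai0 yi0 small.
have Cb_gt0 := mono_addr1_gt0 y b_ge0.
apply: le_lt_trans (mono_addr_le a_ge0 d_01 ai0 yi0) _.
have mb_le : mono b y <= mono (b + d) y.
  by apply: mono_le => // i; rewrite mxE lerDl; case/andP: (d_01 i).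
apply: lt_le_trans mb_le.
by move: small; rewrite mulrDr; have := mulr_gt0 di0_gt0 Cb_gt0; lra.
Qed.

Lemma fk_subr (rs : seq (reaction n)) (k : reaction n -> R) c d :
  fk rs k c - fk rs k d =
  \sum_(r <- rs) (k r * (mono c r.1 - mono d r.1)) *: rvec R r.
Proof. by rewrite /fk -sumrB; apply: eq_bigr => r _; rewrite mulrBr scalerBl. Qed.

Lemma fk_subr_rescale (rs : seq (reaction n)) (k : reaction n -> R) a b a' b' :
  rate_vector rs k ->
  {in rs, forall r, Num.sg (mono a r.1 - mono b r.1) =
                    Num.sg (mono a' r.1 - mono b' r.1)} ->
  exists2 k', rate_vector rs k' &
    fk rs k' a' - fk rs k' b' = fk rs k a - fk rs k b.
Proof.
move=> k_pos sg_eq.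
pose t (r : reaction n) :=
  sg_ratio (mono a r.1 - mono b r.1) (mono a' r.1 - mono b' r.1).
exists (fun r => k r * t r).
  by move=> r r_rs; rewrite mulr_gt0 ?k_pos ?sg_ratio_gt0 ?sg_eq.
rewrite !fk_subr; apply: eq_big_seq => r r_rs.
by rewrite -mulrA sg_ratioK ?sg_eq.
Qed.

Lemma Y_disjoint_hits_zero (rs : seq (reaction n)) a b y y' :
  Y_disjoint rs a b -> (y, y') \in rs -> ~~ (hits_zero a y && hits_zero b y).
Proof.
move=> disj ry; apply/andP=> -[/existsP[i /andP[/eqP ai yi]]].
move=> /existsP[j /andP[/eqP bj yj]].
by apply: (disj y); split; split; [exists y' | exists i | exists y' | exists j].
Qed.

End Monomials.

Section ZeroShift.
Variables (R : realType) (n : nat) (a b : 'rV[R]_n) (eps : R).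
Hypotheses (a_ge0 : nonneg_vec a) (b_ge0 : nonneg_vec b).
Hypotheses (eps_gt0 : 0 < eps) (eps_le1 : eps <= 1).

Definition zero_shift : 'rV[R]_n :=
  \row_i (if (a 0 i == 0) || (b 0 i == 0) then eps else 0).

Lemma zero_shift_01 i : 0 <= zero_shift 0 i <= 1.
Proof. by rewrite mxE; case: ifP; rewrite ?lexx ?ler01 ?eps_le1 ?ltW. Qed.

Lemma pos_vec_addr_shift c : nonneg_vec c ->
  (forall i, c 0 i = 0 -> (a 0 i == 0) || (b 0 i == 0)) ->
  pos_vec (c + zero_shift).
Proof.
move=> c_ge0 c0 i; rewrite !mxE.
have [ci0|ci_neq0] := eqVneq (c 0 i) 0; first by rewrite ci0 add0r c0.
have ci_gt0 : 0 < c 0 i by rewrite lt_def ci_neq0 c_ge0.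
by case: ifP => _; rewrite ?addr0 ?addr_gt0.
Qed.

Lemma sg_mono_shift y : ~~ (hits_zero a y && hits_zero b y) ->
  (0 < mono a y + mono b y ->
   eps * (mono (a + const_mx 1) y + mono (b + const_mx 1) y) <=
   mono a y + mono b y) ->
  Num.sg (mono a y - mono b y) =
  Num.sg (mono (a + zero_shift) y - mono (b + zero_shift) y).
Proof.
move=> + small.
have shift_eps i : (a 0 i == 0) || (b 0 i == 0) -> zero_shift 0 i = eps.
  by rewrite mxE => ->.
case ha: (hits_zero a y); case hb: (hits_zero b y) => //= _.
- have [i0 /andP[/eqP ai0 yi0]] := existsP ha.
  have b_gt0 i : y i != 0%N -> 0 < b 0 i.
    by move=> yi; rewrite lt_def b_ge0 (hits_zeroPn (negbT hb) yi).
  have mb_gt0 := mono_gt0 b_gt0.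
  rewrite (mono_eq0 ha) add0r sub0r in small *.
  rewrite !ltr0_sg ?oppr_lt0 ?subr_lt0 //.
  have shift_i0 : zero_shift 0 i0 = eps by rewrite shift_eps ?ai0 ?eqxx.
  apply: (mono_addr_lt a_ge0 b_ge0 zero_shift_01 _ ai0 yi0);
    by rewrite shift_i0 // small.
- have [i0 /andP[/eqP bi0 yi0]] := existsP hb.
  have a_gt0 i : y i != 0%N -> 0 < a 0 i.
    by move=> yi; rewrite lt_def a_ge0 (hits_zeroPn (negbT ha) yi).
  have ma_gt0 := mono_gt0 a_gt0.
  rewrite (mono_eq0 hb) addr0 subr0 in small *.
  rewrite !gtr0_sg ?subr_gt0 ?subr0 //.
  have shift_i0 : zero_shift 0 i0 = eps by rewrite shift_eps ?bi0 ?eqxx ?orbT.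
  apply: (mono_addr_lt b_ge0 a_ge0 zero_shift_01 _ bi0 yi0);
    by rewrite shift_i0 // (addrC (mono (b + _) y)) small.
- suff shift0 i : y i != 0%N -> zero_shift 0 i = 0 by rewrite !mono_addr_eq.
  move=> yi; rewrite mxE (negPf (hits_zeroPn (negbT ha) yi)).
  by rewrite (negPf (hits_zeroPn (negbT hb) yi)).
Qed.

End ZeroShift.

Lemma boundary_injective_of_injective (R : realType) (n : nat)
    (rs : seq (reaction n)) :
  injective_network R rs -> boundary_injective R rs.
Proof.
move=> inj k k_pos a b a_ge0 b_ge0 neq_ab disj ab_Gamma.
apply/negP => /eqP fk_ab.
pose C (c : 'rV[R]_n) (y : cplx n) := mono (c + const_mx 1) y.
have [eps /andP[eps_gt0 eps_le1] eps_le] := exists_pos_lower_bound rs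
  (fun r => (mono a r.1 + mono b r.1) / (C a r.1 + C b r.1)).
pose d := zero_shift a b eps.
have sg_eq : {in rs, forall r, Num.sg (mono a r.1 - mono b r.1) =
                               Num.sg (mono (a + d) r.1 - mono (b + d) r.1)}.
  move=> [y y'] r_rs; apply: sg_mono_shift => //.
    exact: Y_disjoint_hits_zero disj r_rs.
  move=> m_gt0; rewrite -ler_pdivlMr ?addr_gt0 ?mono_addr1_gt0 //.
  by apply: (eps_le _ r_rs); rewrite divr_gt0 // addr_gt0 ?mono_addr1_gt0.
have [k' k'_pos fk'_ab] := fk_subr_rescale k_pos sg_eq.
have shift_sub : a + d - (b + d) = a - b by rewrite opprD addrACA subrr addr0.
have a'_pos : pos_vec (a + d).
  by apply: pos_vec_addr_shift => // i ->; rewrite eqxx.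
have b'_pos : pos_vec (b + d).
  by apply: pos_vec_addr_shift => // i ->; rewrite eqxx orbT.
have neq' : a + d != b + d by rewrite -subr_eq0 shift_sub subr_eq0.
have Gamma' : in_Gamma rs (a + d - (b + d)) by rewrite shift_sub.
apply: (negP (inj k' k'_pos _ _ a'_pos b'_pos neq' Gamma')).
by rewrite -subr_eq0 fk'_ab fk_ab subrr.
Qed.

Lemma Y_disjoint_pos_vec (R : realType) (n : nat) (rs : seq (reaction n))
    (a b : 'rV[R]_n) :
  pos_vec b -> Y_disjoint rs a b.
Proof.
by move=> b_gt0 y [_ [_ [i [bi _]]]]; have := b_gt0 i; rewrite bi ltxx.
Qed.

Lemma injective_of_boundary_injective (R : realType) (n : nat)
    (rs : seq (reaction n)) :
  boundary_injective R rs -> injective_network R rs.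
Proof.
move=> bd k k_pos a b a_gt0 b_gt0 neq_ab ab_Gamma.
have ge0 c : pos_vec c -> nonneg_vec c by move=> c_gt0 i; apply: ltW.
by apply: bd => //; [exact: ge0 | exact: ge0 | exact: Y_disjoint_pos_vec].
Qed.

Theorem proposition5p2 (R : realType) (n : nat) (rs : seq (reaction n)) :
  uniq rs -> (forall r, r \in rs -> r.1 != r.2) ->
  (injective_network R rs <-> boundary_injective R rs) /\
  (forall a b : 'rV[R]_n, nonneg_vec a -> pos_vec b -> Y_disjoint rs a b).
Proof.
move=> _ _; split=> [|a b _]; last exact: Y_disjoint_pos_vec.
split; first exact: boundary_injective_of_injective.
exact: injective_of_boundary_injective.
Qed.
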